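(* For every $\epsilon>0$ there is $N=N(\epsilon)$ such that every connected graph $G=(V,E)$ with $n>N$ vertices and minimum degree at least $\epsilon n$ satisfies the following. There is a partition of $V$ into $k\le N$ sets $V_1,\ldots,V_k$ and an edge coloring $\chi:E\to\mathcal C$, where $\mathcal C=\{a_1,a_2,a_3,a_4,b_1,b_2,b_3,b_4\}$ is a set of eight distinct colors, such that for every $i\in[k]$ and every $u,v\in V_i$, the pair $u,v$ is both $a$-rainbow connected and $b$-rainbow connected under $\chi$.
   Context: All graphs are finite, simple and undirected. A path is rainbow if its edges have pairwise distinct colors. Under a coloring $\chi:E\to\mathcal C$, vertices $u,v$ are $a$-rainbow connected if there is a rainbow path from $u$ to $v$ all of whose edges have colors in $\{a_1,a_2,a_3,a_4\}$, and $b$-rainbow connected if there is a rainbow path from $u$ to $v$ all of whose edges have colors in $\{b_1,b_2,b_3,b_4\}$. *)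

From HB Require Import structures.
From mathcomp Require Import all_boot all_order all_algebra.
From mathcomp Require Import reals.
Set Implicit Arguments. Unset Strict Implicit. Unset Printing Implicit Defensive.
Import Order.TTheory GRing.Theory Num.Theory.

(* Colours: 'I_8, with a_1..a_4 = 0,1,2,3 and b_1..b_4 = 4,5,6,7. *)
Definition colour := 'I_8.
Definition is_a_colour (c : colour) : bool := (val c < 4)%N.
Definition is_b_colour (c : colour) : bool := (4 <= val c)%N.

Definition simple_graph (T : finType) (e : rel T) : Prop :=
  symmetric e /\ irreflexive e.

Definition connected_graph (T : finType) (e : rel T) : Prop :=
  forall x y : T, connect e x y.

Definition degree (T : finType) (e : rel T) (x : T) : nat := #|[set y | e x y]|.

(* An edge colouring: a colour for each (unordered) pair, only relevant on edges. *)
Definition edge_colouring (T : finType) (chi : T -> T -> colour) : Prop :=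
  forall x y, chi x y = chi y x.

Definition rainbow_connected_in (T : finType) (e : rel T) (chi : T -> T -> colour)
  (P : pred colour) (u v : T) : Prop :=
  exists p : seq T,
    [&& path e u p, last u p == v, uniq (u :: p),
        uniq (pairmap chi u p) & all P (pairmap chi u p)].

Definition a_rainbow_connected (T : finType) e chi (u v : T) :=
  @rainbow_connected_in T e chi is_a_colour u v.
Definition b_rainbow_connected (T : finType) e chi (u v : T) :=
  @rainbow_connected_in T e chi is_b_colour u v.

From HB Require Import structures.
From mathcomp Require Import all_boot all_order all_algebra.
From mathcomp Require Import reals zify.
Import Order.TTheory GRing.Theory Num.Theory.
Set Implicit Arguments. Unset Strict Implicit. Unset Printing Implicit Defensive.

(* Suppose every degree is at least n/m and let s = n / 4m^2.  A maximal set X of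
   vertices with pairwise codegrees below s has fewer than 2m elements (count the
   degrees of 2m of them against their codegrees), and every other vertex p has a
   centre c(p) in X sharing at least s neighbours with it.  Give each vertex a level
   in Z/3 and a label in {a,b} x {0,1}; by a union bound some assignment provides,
   for each p outside X, common neighbours of p and c(p) outside X of every level
   and label.  Colour an edge from X to q by the label of q, and an edge from p to a
   vertex q of the next level by the label of q in a second shade.  Two vertices u,
   v with the same centre x are then joined by a path u q1 x q2 v whose four colours
   are the two shades of two labels of either family, and grouping the vertices by
   centre (each vertex of X on its own) gives at most 4m classes. *)

Section HittingColouring.

Variables (T C : finType).

Lemma card_ffun_avoid (S : {set T}) (c : C) :
  #|[pred f : {ffun T -> C} | [forall q in S, f q != c]]|
    = #|C|.-1 ^ #|S| * #|C| ^ #|~: S|.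
Proof.
pose F q : pred C := if q \in S then predC1 c else predT.
rewrite -[RHS](_ : #|family F| = _); last first.
  rewrite card_family foldrE big_map big_enum /= (bigID (mem S)) /=.
  rewrite (eq_bigr (fun=> #|C|.-1)) => [|q Sq]; last by rewrite /F Sq cardC1.
  rewrite [X in _ * X](eq_bigr (fun=> #|C|)) => [|q /negbTE Sq]; last first.
    by rewrite /F Sq; apply: eq_card.
  by rewrite !prod_nat_const; congr (_ ^ _ * _ ^ _); apply: eq_card => q; rewrite !inE.
apply: eq_card => f; rewrite !inE; apply/forall_inP/familyP => fS q; rewrite /F.
  by case: ifP => // /fS.
by move=> Sq; move: (fS q); rewrite /F Sq.
Qed.

Lemma card_ffun_avoid_le (S : {set T}) (c : C) t : t <= #|S| ->
  #|C| ^ t * #|[pred f : {ffun T -> C} | [forall q in S, f q != c]]|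
    <= #|C|.-1 ^ t * #|C| ^ #|T|.
Proof.
move=> tS; rewrite card_ffun_avoid -(cardsC S) -(subnKC tS) !expnD.
have le_exp a : #|C|.-1 ^ a <= #|C| ^ a.
  by elim: a => // a IH; rewrite !expnS leq_mul // leq_pred.
rewrite mulnCA -!mulnA leq_mul // mulnCA leq_mul // leq_mul //.
Qed.

Lemma exists_hitting_colouring (I : finType) (D : {pred I}) (S : I -> {set T}) t :
  0 < #|C| -> {in D, forall i, t <= #|S i|} ->
  #|I| * #|C| * #|C|.-1 ^ t < #|C| ^ t ->
  exists h : T -> C, {in D, forall i c, exists2 q, q \in S i & h q = c}.
Proof.
move=> C_gt0 tS; pose bad i c (f : {ffun T -> C}) := (i \in D) && [forall q in S i, f q != c].
have card_bad i c : #|C| ^ t * #|[pred f | bad i c f]| <= #|C|.-1 ^ t * #|C| ^ #|T|.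
  have [Di|/negbTE nDi] := boolP (i \in D); last first.
    rewrite (eq_card0 (_ : [pred f | bad i c f] =i pred0)) ?muln0 // => f.
    by rewrite inE /bad nDi.
  apply: leq_trans (card_ffun_avoid_le c (tS i Di)).
  rewrite leq_mul2l; apply/orP; right; apply: eq_leq.
  by apply: eq_card => f; rewrite !inE /bad Di.
move=> small; case: (pickP [pred f | [forall i, forall c, ~~ bad i c f]]) => [f good|all_bad].
  exists f => i Di c; move: good => /forallP/(_ i)/forallP/(_ c).
  rewrite negb_and Di negb_forall => /existsP [q].
  by rewrite negb_imply negbK => /andP [Sq /eqP]; exists q.
have count_bad i c : \sum_f (bad i c f : nat) = #|[pred f | bad i c f]|.
  by rewrite -sum1_card [RHS]big_mkcond; apply: eq_bigr => f _; rewrite inE; case: (bad i c f).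
have cover_ffun : #|C| ^ #|T| <= \sum_i \sum_c #|[pred f | bad i c f]|.
  rewrite -card_ffun -sum1_card.
  rewrite (eq_bigr (fun i => \sum_f \sum_c (bad i c f : nat))); last first.
    by move=> i _; rewrite exchange_big; apply: eq_bigr => c _; rewrite count_bad.
  rewrite exchange_big; apply: leq_sum => f _.
  have := all_bad f; rewrite /= => /negbT; rewrite negb_forall => /existsP [i].
  rewrite negb_forall => /existsP [c]; rewrite negbK => bad_icf.
  by rewrite (bigD1 i) //= (bigD1 c) //= bad_icf.
have union_bound : #|C| ^ t * \sum_i \sum_c #|[pred f | bad i c f]|
    <= #|I| * #|C| * (#|C|.-1 ^ t * #|C| ^ #|T|).
  apply: (@leq_trans (\sum_(i : I) \sum_(c : C) (#|C|.-1 ^ t * #|C| ^ #|T|))).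
    rewrite big_distrr; apply: leq_sum => i _.
    by rewrite big_distrr; apply: leq_sum => c _.
  by rewrite !sum_nat_const mulnA.
have := leq_trans (leq_mul (leqnn (#|C| ^ t)) cover_ffun) union_bound.
by rewrite mulnA leq_pmul2r ?expn_gt0 ?C_gt0 // leqNgt small.
Qed.

End HittingColouring.

Lemma bernoulli_expn k r : k ^ r * (k + r) <= k * k.+1 ^ r.
Proof.
elim: r => [|r IH]; first by rewrite !expn0 mul1n muln1 addn0.
have le_exp : k ^ r <= k.+1 ^ r by elim: (r) => // j IHj; rewrite !expnS leq_mul.
rewrite !expnS; nia.
Qed.

Lemma exp_beats_linear k r n : 0 < k -> k ^ 2 * k.+1 * n < (k + r) ^ 2 ->
  n * k.+1 * k ^ r.*2 < k.+1 ^ r.*2.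
Proof.
move=> k_gt0 small_n.
have sq_bern : k ^ r.*2 * (k + r) ^ 2 <= k ^ 2 * k.+1 ^ r.*2.
  have := leq_mul (bernoulli_expn k r) (bernoulli_expn k r).
  by rewrite -!addnn !expnD -!mulnn; nia.
rewrite -(@ltn_pmul2l (k ^ 2)) ?expn_gt0 ?k_gt0 //; apply: leq_trans sq_bern.
have pos : 0 < k ^ r.*2 by rewrite expn_gt0 k_gt0.
nia.
Qed.

(* [1452 = 11^2 * 12] is [exp_beats_linear] for the 12 level-label pairs; the threshold
   makes [r := (n %/ 4m^2 - 2m)./2] at least [1452 * 4m^2 * (2m + 5)]. *)
Definition threshold (m : nat) :=
  4 * m * m * (2 * (1452 * (4 * m * m) * (2 * m + 5)) + 2 * m).

Lemma threshold_large m n : 0 < m -> threshold m <= n ->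
  11 ^ 2 * 12 * n < (11 + (n %/ (4 * m * m) - 2 * m)./2) ^ 2.
Proof.
move=> m_gt0 large_n.
set M := 4 * m * m; set R := 1452 * M * (2 * m + 5).
set s := n %/ M; set r := (s - 2 * m)./2.
have M_gt0 : 0 < M by rewrite !muln_gt0 m_gt0.
have n_lt : n < s.+1 * M by apply: ltn_ceil.
have s_ge : 2 * R + 2 * m <= s by rewrite leq_divRL // mulnC.
have s_split := odd_double_half (s - 2 * m); rewrite -/r in s_split.
have r_ge : R <= r by case: odd s_split => /=; lia.
have s_le : s <= r.*2 + 2 * m + 1 by case: odd s_split => /=; lia.
have r_gt0 : 0 < r by apply: leq_trans r_ge; rewrite /R; nia.
have n_lt_M : n < M * (r.*2 + 2 * m + 2).
  by apply: (leq_trans n_lt); rewrite mulnC leq_mul2l; apply/orP; right; lia.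
have lin_le : r.*2 + 2 * m + 2 <= r * (2 * m + 5).
  have : 2 * m <= r * (2 * m) by rewrite leq_pmull.
  rewrite mulnDr; lia.
have n_lt_rR : 1452 * n < r * R.
  apply: (@leq_trans (1452 * (M * (r * (2 * m + 5))))); last by rewrite /R; lia.
  by rewrite ltn_pmul2l //; apply: (leq_trans n_lt_M); rewrite leq_mul2l lin_le orbT.
apply: (leq_trans n_lt_rR); apply: (@leq_trans (r * r)); first by rewrite leq_mul2l r_ge orbT.
by rewrite -mulnn leq_mul // leq_addl.
Qed.

Section Codegree.

Variables (T : finType) (e : rel T).

Definition nbhd (x : T) : {set T} := [set y | e x y].

Definition codegree (x y : T) : nat := #|nbhd x :&: nbhd y|.

Definition codegree_sparse (s : nat) (Y : {set T}) : bool :=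
  [forall x in Y, forall y in Y, (x != y) ==> (codegree x y < s)].

Lemma codegree_sparseP s (Y : {set T}) :
  reflect {in Y &, forall x y, x != y -> codegree x y < s} (codegree_sparse s Y).
Proof.
apply: (iffP forall_inP) => [sparse x y Yx Yy | sparse x Yx].
  by move/forall_inP: (sparse x Yx) => /(_ y Yy) /implyP.
by apply/forall_inP => y Yy; apply/implyP; apply: sparse.
Qed.

Lemma sum_adj_le_pairs (Z : {set T}) (w : T) :
  \sum_(y in Z) e y w <= 1 + \sum_(y in Z) \sum_(y' in Z | y' != y) (e y w && e y' w).
Proof.
case: (pickP [pred y in Z | e y w]) => [y0 /andP [Zy0 ey0w] | no_nb]; last first.
  by rewrite big1 // => y Zy; move: (no_nb y); rewrite /= Zy /= => ->.
rewrite (bigD1 y0) //= ey0w add1n ltnS (bigD1 y0 Zy0) /= ey0w /=.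
by apply: leq_trans (leq_addr _ _).
Qed.

Lemma sum_degree_le (Z : {set T}) :
  \sum_(y in Z) degree e y <= #|T| + \sum_(y in Z) \sum_(y' in Z | y' != y) codegree y y'.
Proof.
have count_set (P : pred T) : #|[set w | P w]| = \sum_w P w.
  by rewrite -sum1_card [LHS]big_mkcond; apply: eq_bigr => w _; rewrite inE; case: (P w).
rewrite (eq_bigr (fun y => \sum_w e y w)) => [|y _]; last exact: count_set.
have codegree_sum y y' : codegree y y' = \sum_w (e y w && e y' w).
  by rewrite -count_set; apply: eq_card => w; rewrite !inE.
pose pairs y := \sum_w \sum_(y' in Z | y' != y) (e y w && e y' w).
rewrite [X in _ <= _ + X](eq_bigr pairs) => [|y _]; last first.
  by rewrite /pairs exchange_big; apply: eq_bigr => y' _; rewrite codegree_sum.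
rewrite -sum1_card exchange_big [X in _ <= _ + X]exchange_big -big_split /=.
by apply: leq_sum => w _; apply: sum_adj_le_pairs.
Qed.

Lemma codegree_sparse_card_lt m s (Y : {set T}) :
  0 < m -> 0 < s -> 4 * m * m * s <= #|T| ->
  (forall x, #|T| <= m * degree e x) -> codegree_sparse s Y -> #|Y| < 2 * m.
Proof.
move=> m_gt0 s_gt0 large_T min_deg /codegree_sparseP sparse; rewrite ltnNge.
apply/negP => /card_geqP [z [uniq_z size_z zY]]; set Z := [set y in z].
have card_Z : #|Z| = 2 * m by rewrite cardsE (card_uniqP uniq_z).
have ZY y : y \in Z -> y \in Y by rewrite inE => /zY.
have deg_lb : #|Z| * #|T| <= m * \sum_(y in Z) degree e y.
  by rewrite big_distrr /= -sum_nat_const; apply: leq_sum => y _.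
have codeg_ub :
    \sum_(y in Z) \sum_(y' in Z | y' != y) codegree y y' <= #|Z| * (#|Z| * (s - 1)).
  rewrite -sum_nat_const; apply: leq_sum => y Zy.
  apply: (@leq_trans (\sum_(y' in Z) (s - 1))); last by rewrite sum_nat_const.
  rewrite [X in _ <= X](bigD1 y) //=; apply: leq_trans (leq_addl _ _).
  apply: leq_sum => y' /andP [Zy' y'y].
  by have := sparse y y' (ZY y Zy) (ZY y' Zy'); rewrite eq_sym y'y => /(_ isT); lia.
have deg_ub := leq_trans (sum_degree_le Z) (leq_add (leqnn #|T|) codeg_ub).
have := leq_trans deg_lb (leq_mul (leqnn m) deg_ub).
rewrite card_Z; nia.
Qed.

End Codegree.

Lemma card_preim_partition (T rT : finType) (f : T -> rT) (D : {set T}) :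
  #|preim_partition f D| <= #|f @: D|.
Proof.
rewrite /preim_partition /equivalence_partition.
rewrite (eq_imset _ (_ : _ =1 (fun k => [set y in D | k == f y]) \o f)) // imset_comp.
exact: leq_imset_card.
Qed.

Lemma ordS_ordS_neq (a : 'I_3) : ordS (ordS a) != a.
Proof. by case: a => [[|[|[|]]]]. Qed.

Lemma rainbow_connected_walk4 (T : finType) (e : rel T) (chi : T -> T -> colour)
    (P : pred colour) u q1 x q2 v :
  irreflexive e -> e u q1 -> e q1 x -> e x q2 -> e q2 v ->
  u != x -> v != x -> q1 != q2 ->
  uniq [:: chi u q1; chi q1 x; chi x q2; chi q2 v] ->
  all P [:: chi u q1; chi q1 x; chi x q2; chi q2 v] ->
  rainbow_connected_in e chi P u v.
Proof.
move=> e_irr e1 e2 e3 e4 ux vx q12 rainbow allP.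
have edge_neq a b : e a b -> a != b by apply: contraTneq => ->; rewrite e_irr.
have [<-|uv] := eqVneq u v; first by exists [::]; rewrite /= eqxx.
have [q1v|q1v] := eqVneq q1 v.
  by exists [:: q1]; move: allP; rewrite /= -q1v e1 eqxx inE edge_neq //= => /andP [->].
have [q2u|q2u] := eqVneq q2 u.
  by exists [:: v]; move: allP; rewrite /= -q2u e4 eqxx inE edge_neq //= => /and4P [_ _ _ ->].
exists [:: q1; x; q2; v]; move: rainbow allP; rewrite /= e1 e2 e3 e4 eqxx => -> ->.
rewrite !inE !andbT (negbTE ux) (negbTE uv) (negbTE q12) (negbTE q1v).
rewrite (negbTE (edge_neq _ _ e1)) (negbTE (edge_neq _ _ e2)) (negbTE (edge_neq _ _ e3)).
by rewrite (eq_sym u q2) (negbTE q2u) (eq_sym x v) (negbTE vx) (edge_neq _ _ e4).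
Qed.

(* A label [l] names the family ([l.1 = false] for a, [true] for b) and one of two
   indices; [link] selects the shade used between consecutive levels. *)
Definition tint (link : bool) (l : bool * bool) : colour :=
  inord (4 * l.1 + 2 * link + l.2).

Lemma tint_a_colour link i : is_a_colour (tint link (false, i)).
Proof. by rewrite /is_a_colour /= (@inordK 7); case: link; case: i. Qed.

Lemma tint_b_colour link i : is_b_colour (tint link (true, i)).
Proof. by rewrite /is_b_colour /= (@inordK 7); case: link; case: i. Qed.

Lemma tint_uniq b :
  uniq [:: tint true (b, false); tint false (b, false);
           tint false (b, true); tint true (b, true)].
Proof. by rewrite -(map_inj_uniq val_inj) /= !(@inordK 7); case: b. Qed.

Section Construction.

Variables (T : finType) (e : rel T).
Hypotheses (e_sym : symmetric e) (e_irr : irreflexive e).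
Variables (s : nat) (X : {set T}).
Hypothesis X_max : maxset (codegree_sparse e s) X.

Definition centre (p : T) : T := odflt p [pick x in X | s <= codegree e p x].

Lemma centre_spec p : p \notin X -> centre p \in X /\ s <= codegree e p (centre p).
Proof.
move=> Xp; rewrite /centre; case: pickP => [x /andP [] //| no_centre] /=.
suff /(maxsetsup X_max) /(_ (subsetUr _ _)) grown : codegree_sparse e s (p |: X).
  by move: Xp; rewrite -grown setU11.
have /codegree_sparseP sparseX := maxsetp X_max.
apply/codegree_sparseP => a b /setU1P [-> | Xa] /setU1P [-> | Xb] ab.
- by rewrite eqxx in ab.
- by move: (no_centre b); rewrite /= Xb /= => /negbT; rewrite -ltnNge.
- by move: (no_centre a); rewrite /= Xa /codegree setIC /= => /negbT; rewrite -ltnNge.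
- exact: sparseX.
Qed.

Definition shared_nbhd (p : T) : {set T} := (nbhd e p :&: nbhd e (centre p)) :\: X.

Lemma card_shared_nbhd p : p \notin X -> s - #|X| <= #|shared_nbhd p|.
Proof.
move=> Xp; have [_ codeg_p] := centre_spec Xp.
have := subset_leq_card (subsetIr (nbhd e p :&: nbhd e (centre p)) X).
by rewrite cardsD; move: codeg_p; rewrite /codegree; lia.
Qed.

Variable h : T -> 'I_3 * (bool * bool).
Hypothesis h_hits :
  {in [pred p | p \notin X], forall p c, exists2 q, q \in shared_nbhd p & h q = c}.

Lemma next_level_neighbour p l : p \notin X ->
  exists q, [/\ e p q, e (centre p) q, q \notin X, (h q).1 = ordS (h p).1 & (h q).2 = l].
Proof.
move=> Xp; have [q] := h_hits Xp (ordS (h p).1, l).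
by rewrite !inE => /andP [Xq /andP [epq ecq]] hq; exists q; rewrite hq.
Qed.

(* The [ord0] branches are junk: edges inside X or between non-consecutive levels
   are never used. *)
Definition chi (p q : T) : colour :=
  if p \in X then (if q \in X then ord0 else tint false (h q).2)
  else if q \in X then tint false (h p).2
  else if (h q).1 == ordS (h p).1 then tint true (h q).2
  else if (h p).1 == ordS (h q).1 then tint true (h p).2
  else ord0.

Lemma chi_sym : edge_colouring chi.
Proof.
move=> p q; rewrite /chi; case: (p \in X); case: (q \in X) => //.
case: eqP => [up | _]; case: eqP => [down | _] //.
by have := ordS_ordS_neq (h p).1; rewrite -up -down eqxx.
Qed.

Lemma chi_spoke x q : x \in X -> q \notin X -> chi x q = tint false (h q).2.
Proof. by move=> Xx Xq; rewrite /chi Xx (negbTE Xq). Qed.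

Lemma chi_link p q : p \notin X -> q \notin X -> (h q).1 = ordS (h p).1 ->
  chi p q = tint true (h q).2.
Proof. by move=> Xp Xq up; rewrite /chi (negbTE Xp) (negbTE Xq) up eqxx. Qed.

Definition cluster (p : T) : T * bool :=
  if p \in X then (p, true) else (centre p, false).

Lemma card_cluster_partition : #|preim_partition cluster [set: T]| <= 2 * #|X|.
Proof.
apply: (leq_trans (card_preim_partition _ _)).
rewrite mulnC -card_bool -cardsT -cardsX.
apply/subset_leq_card/subsetP => _ /imsetP [p _ ->].
rewrite /cluster; case: ifP => Xp; rewrite inE /= ?Xp ?inE //.
by have [-> _] := centre_spec (negbT Xp).
Qed.

Lemma cluster_rainbow (P : pred colour) b u v :
  (forall link i, P (tint link (b, i))) -> cluster u = cluster v ->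
  rainbow_connected_in e chi P u v.
Proof.
move=> tintP; rewrite /cluster.
case: (boolP (u \in X)) => Xu; case: (boolP (v \in X)) => Xv // [x_eq].
  by rewrite -x_eq; exists [::]; rewrite /= eqxx.
have [Xx _] := centre_spec Xu; set x := centre u in x_eq Xx *.
have [q1 [euq1 exq1 Xq1 up1 lab1]] := next_level_neighbour (b, false) Xu.
have [q2 [evq2 exq2 Xq2 up2 lab2]] := next_level_neighbour (b, true) Xv.
rewrite -x_eq in exq2.
apply: (@rainbow_connected_walk4 _ e chi P u q1 x q2 v) => //.
- by rewrite e_sym.
- by rewrite e_sym.
- by apply: contraNneq Xu => ->.
- by apply: contraNneq Xv => ->.
- by apply/eqP => q12; move: lab1; rewrite q12 lab2 => -[].
all: rewrite (chi_link Xu Xq1 up1) (chi_sym q1) (chi_spoke Xx Xq1) (chi_spoke Xx Xq2).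
all: rewrite (chi_sym q2) (chi_link Xv Xq2 up2) lab1 lab2 ?tint_uniq //=.
by rewrite !tintP.
Qed.

End Construction.

Lemma rainbow_partition_min_degree (m : nat) (T : finType) (e : rel T) :
  0 < m -> symmetric e -> irreflexive e -> threshold m < #|T| ->
  (forall x, #|T| <= m * degree e x) ->
  exists (P : {set {set T}}) (chi : T -> T -> colour),
    [/\ partition P [set: T], #|P| <= threshold m, edge_colouring chi &
      forall A, A \in P -> forall u v, u \in A -> v \in A ->
        a_rainbow_connected e chi u v /\ b_rainbow_connected e chi u v].
Proof.
move=> m_gt0 e_sym e_irr large_T min_deg.
have M_le : 4 * m * m <= threshold m by rewrite /threshold leq_pmulr //; lia.
set s := #|T| %/ (4 * m * m).
have s_gt0 : 0 < s.
  by rewrite divn_gt0 ?muln_gt0 ?m_gt0 // (leq_trans M_le (ltnW large_T)).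
have sM : 4 * m * m * s <= #|T| by rewrite mulnC leq_trunc_div.
have sparse0 : codegree_sparse e s set0 by apply/codegree_sparseP => x; rewrite inE.
have [X X_max _] := maxset_exists sparse0.
have X_small := codegree_sparse_card_lt m_gt0 s_gt0 sM min_deg (maxsetp X_max).
set r := (s - 2 * m)./2.
have card_C : #|{: 'I_3 * (bool * bool)}| = 12 by rewrite !card_prod card_ord card_bool.
have [h h_hits] : exists h : T -> 'I_3 * (bool * bool),
    {in [pred p | p \notin X], forall p c, exists2 q, q \in shared_nbhd e s X p & h q = c}.
  apply: (@exists_hitting_colouring _ _ T _ _ r.*2); rewrite ?card_C //.
    move=> p Xp; apply: leq_trans (card_shared_nbhd X_max Xp).
    by have := odd_double_half (s - 2 * m); lia.
  by apply: exp_beats_linear => //; apply: threshold_large (ltnW large_T).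
exists (preim_partition (cluster e s X) [set: T]), (chi X h); split.
- exact: preim_partitionP.
- apply: leq_trans (card_cluster_partition X_max) _; apply: leq_trans M_le; nia.
- exact: chi_sym.
move=> _ /imsetP [x _ ->] u v; rewrite !inE => /eqP xu /eqP xv.
have same_cluster := etrans (esym xu) xv.
split; [apply: (cluster_rainbow e_sym e_irr X_max h_hits (b := false)) |
        apply: (cluster_rainbow e_sym e_irr X_max h_hits (b := true))] => //.
- exact: tint_a_colour.
- exact: tint_b_colour.
Qed.

Local Open Scope ring_scope.

Lemma linear_degree_scale (R : realType) (eps : R) : 0 < eps ->
  exists2 m : nat, (0 < m)%N & forall n d : nat, eps * n%:R <= d%:R -> (n <= m * d)%N.
Proof.
move=> eps_gt0; set b := Num.bound eps^-1.
have inv_lt : eps^-1 < b%:R by apply: archi_boundP; rewrite invr_ge0 ltW.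
have one_le : 1 <= b.+1%:R * eps.
  rewrite -[X in X <= _](mulVf (lt0r_neq0 eps_gt0)) ler_pM2r //.
  by apply: le_trans (ltW inv_lt) _; rewrite ler_nat.
exists b.+1 => // n d eps_n; rewrite -(ler_nat R) natrM.
apply: le_trans (ler_wpM2l (ler0n _ _) eps_n); rewrite mulrA.
by rewrite ler_peMl.
Qed.

Theorem lemma3p6 (R : realType) (eps : R) (heps : 0 < eps) :
  exists N : nat,
    forall (T : finType) (e : rel T),
      simple_graph e -> connected_graph e ->
      (N < #|T|)%N ->
      (forall x : T, eps * (#|T|)%:R <= (degree e x)%:R) ->
      exists (P : {set {set T}}) (chi : T -> T -> colour),
        [/\ partition P [set: T], (#|P| <= N)%N, edge_colouring chi &
          forall A, A \in P -> forall u v, u \in A -> v \in A ->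
            a_rainbow_connected e chi u v /\ b_rainbow_connected e chi u v].
Proof.
have [m m_gt0 scale] := linear_degree_scale heps.
exists (threshold m) => T e [e_sym e_irr] _ large_T min_deg.
by apply: rainbow_partition_min_degree => // x; apply: scale.
Qed.
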